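(* Let $n\ge1$, $k\ge1$, and $\gamma=((i_1\,j_1),\dots,(i_k\,j_k))\in\Sigma^*_n(k)$. Then: 1. The sequence $(j_1,\dots,j_k)$ has pairwise distinct terms. 2. For all $l\in\{1,\dots,k\}$, $j_l$ is a fixed point of $\gamma_{l-1}$. 3. For all $l\in\{1,\dots,k\}$, $\gamma_l$ is obtained from $\gamma_{l-1}$ by inserting $j_l$ into the cycle of $i_l$ immediately after $i_l$; that is, $\gamma_l(i_l)=j_l$, $\gamma_l(j_l)=\gamma_{l-1}(i_l)$, and $\gamma_l(x)=\gamma_{l-1}(x)$ for $x\notin\{i_l,j_l\}$. 4. For all $m\in\{1,\dots,k\}$, the support of $\gamma_m$ equals $\bigcup_{l=1}^m\{i_l,j_l\}$.
   Context: Let $n\ge1$. $\mathfrak S_n$ is the symmetric group on $\{1,\dots,n\}$; products of permutations are composed from right to left, i.e. $(\sigma\pi)(x)=\sigma(\pi(x))$. $\mathsf T_n$ denotes the set of transpositions; a transposition is always written $(i\,j)$ with $i<j$. For $\sigma\in\mathfrak S_n$, $\ell(\sigma)$ is the number of cycles of $\sigma$ (fixed points counted) and $|\sigma|=n-\ell(\sigma)$. Write $\sigma_1\preccurlyeq\sigma_2$ iff $|\sigma_2|=|\sigma_1|+|\sigma_1^{-1}\sigma_2|$. For $k\ge0$, $\Sigma_n(k)=\{(\tau_1,\dots,\tau_k)\in(\mathsf T_n)^k : |\tau_1\cdots\tau_k|=k,\ \tau_1\cdots\tau_k\preccurlyeq(1\,2\,\dots\,n)\}$, and $\Sigma^*_n(k)$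 is the subset of those $((i_1\,j_1),\dots,(i_k\,j_k))\in\Sigma_n(k)$ with $i_1\le i_2\le\dots\le i_k$. For $\gamma=(\tau_1,\dots,\tau_k)$, $\gamma_l=\tau_1\cdots\tau_l$ for $0\le l\le k$ ($\gamma_0=\mathrm{id}$). The support of a permutation is its set of non-fixed points. *)

From HB Require Import structures.
From mathcomp Require Import all_boot all_order all_fingroup.
Set Implicit Arguments. Unset Strict Implicit. Unset Printing Implicit Defensive.
Local Open Scope group_scope.

(* Points {1,...,n} of the paper are modelled by 'I_n = {0,...,n-1}
   (point p of the paper is the ordinal p-1); this shift preserves the order. *)

(* Paper product: (pmul s t)(x) = s (t x)  (composition right to left).
   MathComp's s * t on perms is  x |-> t (s x), so pmul s t = t * s. *)
Definition pmul n (s t : {perm 'I_n}) : {perm 'I_n} := (t * s)%g.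

Definition ell n (s : {perm 'I_n}) : nat := #|porbits s|.
Definition absp n (s : {perm 'I_n}) : nat := n - ell s.

Definition preceq n (s1 s2 : {perm 'I_n}) : bool :=
  absp s2 == absp s1 + absp (pmul s1^-1 s2).

(* the long cycle (1 2 ... n), i.e. i |-> i+1 mod n on 'I_n *)
Definition lcycle n : {perm 'I_n} := perm (@ordS_inj n).

Definition trans n (p : 'I_n * 'I_n) : {perm 'I_n} := tperm p.1 p.2.

Definition prodT n (s : seq ('I_n * 'I_n)) : {perm 'I_n} :=
  foldl (fun acc p => pmul acc (trans p)) 1 s.

Definition gam n (s : seq ('I_n * 'I_n)) (l : nat) : {perm 'I_n} :=
  prodT (take l s).

Definition inSigma n k (g : k.-tuple ('I_n * 'I_n)) : bool :=
  [&& all (fun p : 'I_n * 'I_n => p.1 < p.2) g,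
      absp (prodT g) == k & preceq (prodT g) (lcycle n)].

Definition inSigmaStar n k (g : k.-tuple ('I_n * 'I_n)) : bool :=
  inSigma g && sorted leq [seq val p.1 | p <- g].

Definition supp n (s : {perm 'I_n}) : {set 'I_n} := [set x | s x != x].

From HB Require Import structures.
From mathcomp Require Import all_boot all_order all_fingroup.
From mathcomp Require Import zify.
Set Implicit Arguments. Unset Strict Implicit. Unset Printing Implicit Defensive.

(* Let N be the number of points, c = (1 2 ... N) the long cycle and
   gamma_l = tau_1 ... tau_l.  The proof counts weak non-excedances,
   nexc s = #{x | s x <= x}, and proceeds in four steps.
   1. Cycle counts versus non-excedances: ell s <= nexc s (the largest point
      of a cycle is a non-excedance), and nexc s + ell (s^-1 c) <= N + 1
      (apart from the point N, the non-excedances of s are mapped onto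
      excedances of s^-1 c).
   2. A transposition changes the number of cycles by at most one.  Hence
      ell gamma_l >= N - l, while the hypotheses |gamma_k| = k and
      gamma_k <= c give ell (gamma_l^-1 c) >= l + 1.  Together with step 1,
      nexc gamma_l = N - l exactly: each factor removes one non-excedance.
   3. Removing exactly one non-excedance when multiplying by (i j), i < j,
      forces i < gamma_{l-1} j <= j and gamma_{l-1} i not in (i, j].
   4. Since i_1 <= ... <= i_k, the point gamma_t j_l can never land in
      (i_l, j_l] unless it equals j_l; so j_l is fixed by gamma_{l-1}.  The
      insertion rule, the description of the supports and the distinctness
      of the j_l follow by direct computation and induction on l. *)

Lemma ell_id n : ell (1 : {perm 'I_n}) = n.
Proof.
have orbit1 (x : 'I_n) : porbit 1 x = [set x].
  apply/setP => y; rewrite inE; apply/porbitP/eqP => [[i ->]|->].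
    by rewrite expg1n perm1.
  by exists 0; rewrite expg0 perm1.
by rewrite /ell /porbits (eq_imset _ orbit1) card_imset ?card_ord //; exact: set1_inj.
Qed.

Lemma ell_le n (s : {perm 'I_n}) : ell s <= n.
Proof. by rewrite /ell; apply: leq_trans (leq_imset_card _ _) _; rewrite card_ord. Qed.

Lemma ell_gt0 n (s : {perm 'I_n.+1}) : 0 < ell s.
Proof.
by rewrite /ell card_gt0; apply/set0Pn; exists (porbit s ord0); exact: imset_f.
Qed.

(* Multiplying by a transposition merges two cycles or splits one. *)
Lemma ell_tpermM n (s : {perm 'I_n}) (a b : 'I_n) : a != b ->
  ell s <= (ell (tperm a b * s)).+1 /\ ell (tperm a b * s) <= (ell s).+1.
Proof.
move=> ab; have := porbits_mul_tperm s a b; rewrite /ell ab /=.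
by set e := #|porbits _|; case: (a \in porbit s b) => /=; lia.
Qed.

Lemma ell_mulTperm n (s : {perm 'I_n}) (a b : 'I_n) : a != b ->
  ell (s * tperm a b) <= (ell s).+1.
Proof.
move=> ab; rewrite /ell -porbitsV -(porbitsV s) invMg tpermV.
by case: (ell_tpermM s^-1 ab).
Qed.

Definition nexc n (s : {perm 'I_n}) : nat := #|[set x | s x <= x]|.

(* The largest point of each cycle is a non-excedance. *)
Lemma ell_le_nexc n (s : {perm 'I_n}) : ell s <= nexc s.
Proof.
rewrite /ell /nexc; apply: leq_trans (leq_imset_card (porbit s) _).
apply/subset_leq_card/subsetP => _ /imsetP [x _ ->].
have [y xy ymax] := arg_maxnP (@nat_of_ord n) (porbit_id s x).
have orb_y : porbit s y = porbit s x by apply/eqP; rewrite eq_porbit_mem.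
apply/imsetP; exists y; last by rewrite orb_y.
by rewrite inE; apply: ymax; rewrite -orb_y; exact: (mem_porbit s 1 y).
Qed.

Definition compl n (s : {perm 'I_n}) : {perm 'I_n} := pmul s^-1 (lcycle n).

Lemma lcycleE n (x : 'I_n) : val (lcycle n x) = x.+1 %% n.
Proof. by rewrite /lcycle permE. Qed.

Lemma compl_tpermM n (s : {perm 'I_n}) (a b : 'I_n) :
  compl (tperm a b * s)%g = (compl s * tperm a b)%g.
Proof. by rewrite /compl /pmul invMg tpermV mulgA. Qed.

(* With r = s^-1 c: if r y is a non-excedance of s then, unless y is the
   last point, y is an excedance of r.  So nexc s <= 1 + (N - nexc r) and
   nexc r >= ell r. *)
Lemma nexc_compl_bound n (s : {perm 'I_n.+1}) : nexc s + ell (compl s) <= n.+2.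
Proof.
set r := compl s; set C := ~: [set y | r y <= y].
have nexc_pre : nexc s = #|r @^-1: [set x | s x <= x]|.
  by rewrite card_preimset //; exact: perm_inj.
have sub : r @^-1: [set x | s x <= x] \subset ord_max |: C.
  apply/subsetP => y; rewrite !inE /r /compl /pmul permM permKV -ltnNge.
  case: (eqVneq y ord_max) => //= /negPf ym.
  have yn : y < n.
    by rewrite ltn_neqAle -ltnS ltn_ord andbT; move: ym; rewrite -val_eqE => ->.
  by rewrite lcycleE modn_small.
have := subset_leq_card sub; rewrite cardsU1 -nexc_pre.
have := cardsC [set y | r y <= y]; rewrite card_ord -/C.
have := ell_le_nexc r; have : (ord_max \notin C) <= 1 by case: (_ \notin _).
rewrite /nexc; lia.
Qed.

Lemma nexc_sum n (s : {perm 'I_n}) : nexc s = \sum_x (s x <= x : nat).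
Proof.
rewrite /nexc -sum1_card big_mkcond /=.
by apply: eq_bigr => x _; rewrite inE; case: ifP.
Qed.

(* s (a b) agrees with s outside {a, b}, where it takes the values s b, s a. *)
Lemma nexc_tperm n (s : {perm 'I_n}) (a b : 'I_n) : a < b ->
  nexc s + ((s b <= a) + (s a <= b)) =
  nexc (tperm a b * s) + ((s a <= a) + (s b <= b)).
Proof.
move=> ab; have ba : b != a by rewrite -val_eqE gtn_eqF.
rewrite !nexc_sum (bigD1 a) // (bigD1 b) //= [in RHS](bigD1 a) // (bigD1 b) //=.
rewrite !permM tpermL tpermR.
under [in RHS]eq_bigr => x /andP [xa xb] do rewrite permM tpermD 1?eq_sym //.
lia.
Qed.

Lemma nexc_drop n (s : {perm 'I_n}) (a b : 'I_n) : a < b ->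
  nexc s = (nexc (tperm a b * s)).+1 ->
  [/\ a < s b, s b <= b & (s a <= a) = (s a <= b)].
Proof.
move=> ab drop; have := nexc_tperm s ab; rewrite drop.
have mono x : (x <= a) ==> (x <= b) by apply/implyP => xa; exact: leq_trans xa (ltnW ab).
move: (mono (s a)) (mono (s b)); rewrite ltnNge.
case: (s a <= a); case: (s a <= b); case: (s b <= a); case: (s b <= b) => //=; lia.
Qed.

Lemma gam0 n (s : seq ('I_n * 'I_n)) : gam s 0 = 1%g.
Proof. by rewrite /gam take0. Qed.

Lemma gamS n (s : seq ('I_n * 'I_n)) l x0 : l < size s ->
  gam s l.+1 = (trans (nth x0 s l) * gam s l)%g.
Proof. by move=> ls; rewrite /gam (take_nth x0) // /prodT foldl_rcons. Qed.

Lemma bigcup_ord_ltS (T : finType) k (F : 'I_k -> {set T}) m (mk : m < k) :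
  \bigcup_(i : 'I_k | i < m.+1) F i = F (Ordinal mk) :|: \bigcup_(i : 'I_k | i < m) F i.
Proof.
rewrite (bigD1 (Ordinal mk)) ?ltnSn //=; congr (_ :|: _).
by apply: eq_bigl => i; rewrite ltnS leq_eqVlt -val_eqE /=; case: ltngtP.
Qed.

Section SigmaStar.
Variables (n k : nat) (g : k.-tuple ('I_n.+1 * 'I_n.+1)).
Hypothesis hg : inSigmaStar g.

Local Notation i_ l := (tnth g l).1.
Local Notation j_ l := (tnth g l).2.

Lemma i_lt_j (l : 'I_k) : i_ l < j_ l.
Proof. by case/andP: hg => /and3P [/allP lt _ _] _; exact: lt (mem_tnth l g). Qed.

Lemma i_neq_j (l : 'I_k) : i_ l != j_ l.
Proof. by rewrite -val_eqE neq_ltn i_lt_j. Qed.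

Lemma i_sorted (m l : 'I_k) : m <= l -> i_ m <= i_ l.
Proof.
case/andP: hg => _ sorted_i ml.
have := sorted_leq_nth leq_trans leqnn 0 sorted_i.
rewrite size_map size_tuple => /(_ m l).
rewrite !inE !(nth_map (tnth g m)) ?size_tuple //.
by rewrite -!tnth_nth; apply.
Qed.

Lemma gam_step (l : 'I_k) : gam g l.+1 = (tperm (i_ l) (j_ l) * gam g l)%g.
Proof. by rewrite (gamS (tnth g l)) ?size_tuple // -tnth_nth. Qed.

(* Each factor lowers the number of cycles by at most one. *)
Lemma ell_gam_lb l : l <= k -> n.+1 <= ell (gam g l) + l.
Proof.
elim: l => [|l IH] lk; first by rewrite gam0 ell_id addn0.
have := IH (ltnW lk); rewrite (gam_step (Ordinal lk)) /=.
have [] := ell_tpermM (gam g l) (i_neq_j (Ordinal lk)); lia.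
Qed.

(* From |gamma_k| = k and gamma_k <= c: gamma_k^-1 c has more than k cycles. *)
Lemma ell_compl_top : k < ell (compl (gam g k)).
Proof.
case/andP: hg => /and3P [_ /eqP abs_k prec] _.
have gam_k : prodT g = gam g k by rewrite /gam take_oversize ?size_tuple.
move: prec abs_k; rewrite gam_k /preceq /absp -/(compl _) => /eqP.
have := ell_gt0 (lcycle n.+1); have := ell_le (compl (gam g k)); lia.
Qed.

(* Going down the chain removes at most one cycle of the complement per step. *)
Lemma ell_compl_lb l : l <= k -> l < ell (compl (gam g l)).
Proof.
move=> lk; rewrite -(subKn lk); elim: (k - l) (leq_subr l k) => [|d IH] dk.
  by rewrite subn0; exact: ell_compl_top.
have lt : k - d.+1 < k by lia.
have := IH (ltnW dk); rewrite -(subnSK dk) (gam_step (Ordinal lt)) compl_tpermM /=.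
by have := ell_mulTperm (compl (gam g (k - d.+1))) (i_neq_j (Ordinal lt)); lia.
Qed.

(* Squeezing steps 1 and 2: gamma_l has exactly N - l non-excedances. *)
Lemma nexc_gam l : l <= k -> nexc (gam g l) + l = n.+1.
Proof.
move=> lk; have := ell_gam_lb lk; have := ell_compl_lb lk.
have := nexc_compl_bound (gam g l); have := ell_le_nexc (gam g l); lia.
Qed.

Lemma step_local (l : 'I_k) :
  [/\ i_ l < gam g l (j_ l), gam g l (j_ l) <= j_ l
    & (gam g l (i_ l) <= i_ l) = (gam g l (i_ l) <= j_ l)].
Proof.
apply: nexc_drop (i_lt_j l) _; rewrite -gam_step.
by have := nexc_gam (ltnW (ltn_ord l)); have := nexc_gam (ltn_ord l); lia.
Qed.

(* Invariant for t <= l: gamma_t j_l is either j_l or outside (i_l, j_l].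
   The only step that moves j_l is one with j_t = j_l, which sends it to
   gamma_t i_t, outside (i_t, j_t] and hence outside (i_l, j_l] as i_t <= i_l. *)
Lemma j_outside (l : 'I_k) t : t <= l ->
  gam g t (j_ l) = j_ l \/ ~~ (i_ l < gam g t (j_ l) <= j_ l).
Proof.
elim: t => [|t IH] tl; first by left; rewrite gam0 perm1.
have tk : t < k by apply: leq_trans tl _; exact: ltnW.
have i_tl : i_ (Ordinal tk) <= i_ l by apply: i_sorted; exact: ltnW.
rewrite (gam_step (Ordinal tk)) permM /=.
case: (eqVneq (j_ l) (j_ (Ordinal tk))) => [jl_jt|jl_jt].
  right; rewrite jl_jt tpermR.
  have [_ _ /= fixed_ineq] := step_local (Ordinal tk).
  apply/negP => /andP [i_lt_y]; rewrite -fixed_ineq => /leq_trans/(_ i_tl).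
  by rewrite leqNgt i_lt_y.
case: (eqVneq (j_ l) (i_ (Ordinal tk))) => [jl_it|jl_it].
  by move: i_tl; rewrite -jl_it leqNgt i_lt_j.
by rewrite tpermD 1?eq_sym //; apply: IH; exact: ltnW.
Qed.

Lemma j_fixed (l : 'I_k) : gam g l (j_ l) = j_ l.
Proof.
have [i_lt le_j _] := step_local l.
by case: (j_outside (leqnn l)) => //; rewrite i_lt le_j.
Qed.

Lemma gam_insert (l : 'I_k) :
  [/\ gam g l.+1 (i_ l) = j_ l, gam g l.+1 (j_ l) = gam g l (i_ l)
    & forall x, x != i_ l -> x != j_ l -> gam g l.+1 x = gam g l x].
Proof.
rewrite gam_step !permM tpermL tpermR j_fixed; split => // x xi xj.
by rewrite permM tpermD // eq_sym.
Qed.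

Lemma supp_gamS (l : 'I_k) :
  supp (gam g l.+1) = [set i_ l; j_ l] :|: supp (gam g l).
Proof.
have [gam_i gam_j gam_x] := gam_insert l.
apply/setP => x; rewrite !inE.
case: (eqVneq x (i_ l)) => [->|xi] /=; first by rewrite gam_i eq_sym i_neq_j.
case: (eqVneq x (j_ l)) => [->|xj] /=.
  by rewrite gam_j -(j_fixed l) (inj_eq perm_inj) i_neq_j.
by rewrite gam_x.
Qed.

Lemma supp_gam m : m <= k ->
  supp (gam g m) = \bigcup_(l : 'I_k | l < m) [set i_ l; j_ l].
Proof.
elim: m => [|m IH] mk.
  rewrite big_pred0 => [|l]; last by rewrite ltn0.
  by apply/setP => x; rewrite !inE gam0 perm1 eqxx.
by rewrite (supp_gamS (Ordinal mk)) (bigcup_ord_ltS _ mk) IH // ltnW.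
Qed.

(* An earlier j_l lies in the support of gamma_{m-1}, which fixes j_m. *)
Lemma j_distinct (l m : 'I_k) : l < m -> j_ l != j_ m.
Proof.
move=> lm; have : j_ l \in supp (gam g m).
  rewrite supp_gam 1?ltnW //; apply/bigcupP; exists l => //.
  by rewrite !inE eqxx orbT.
by rewrite inE; apply: contraNneq => ->; rewrite j_fixed.
Qed.

Lemma j_uniq : uniq [seq p.2 | p <- g].
Proof.
rewrite -[in X in map _ X](map_tnth_enum g) -map_comp map_inj_uniq ?enum_uniq //.
move=> l m /= /eqP; case: (ltngtP l m) => [lm|ml|/val_inj //].
  by rewrite (negPf (j_distinct lm)).
by rewrite eq_sym (negPf (j_distinct ml)).
Qed.

End SigmaStar.

Theorem lemma3p4 (n k : nat) (hn : 1 <= n) (hk : 1 <= k)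
    (g : k.-tuple ('I_n * 'I_n)) (hg : inSigmaStar g) :
  [/\ uniq [seq p.2 | p <- g],
      (forall l : 'I_k, gam g l (tnth g l).2 = (tnth g l).2),
      (forall l : 'I_k,
         [/\ gam g l.+1 (tnth g l).1 = (tnth g l).2,
             gam g l.+1 (tnth g l).2 = gam g l (tnth g l).1
           & forall x, x != (tnth g l).1 -> x != (tnth g l).2 ->
               gam g l.+1 x = gam g l x])
    & (forall m : nat, 1 <= m -> m <= k ->
         supp (gam g m) =
         \bigcup_(l : 'I_k | l < m) [set (tnth g l).1; (tnth g l).2])].
Proof.
case: n hn g hg => [//|n] _ g hg.
split; [exact: j_uniq | exact: j_fixed | exact: gam_insert |].
by move=> m _; exact: supp_gam.
Qed.
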